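(* Fix $\alpha\in\mathbb{R}\setminus\{0,1\}$ and let $F$ be the (weighted) generalized entropy index of parameter $\alpha$ defined in the context, with $q(\mu)=\mu^\alpha$. Let $n\ge 1$, let $K\in\mathbb{R}_{\ge 0}^{n\times n}$ be column-normalized, i.e. $\sum_{i=1}^n K_{ij}=1$ for every $j$, and assume every row of $K$ has positive sum, i.e. $K_i^\top\vec 1>0$ for all $i$, where $K_i$ denotes the $i$-th row of $K$. Then for every $\vec y\in\mathbb{R}_{>0}^n$, with $\mu=\frac1n\sum_{i=1}^n y_i$, $$F(\vec y)=\sum_{i=1}^n \frac{q\big(A(K,\vec y)_i\big)\,K_i^\top\vec 1}{q(\mu)\,n}\,F(\vec y,K_i)\;+\;F\big(A(K,\vec y),K\vec 1\big).$$
   Context: For $x\in\mathbb{R}_{>0}^n$ and a weight vector $w\in\mathbb{R}_{\ge0}^n$ with $\|w\|_1>0$, the weighted mean is $\mu_w=\sum_i w_i x_i/\|w\|_1$, and the weighted generalized entropy of parameter $\alpha\notin\{0,1\}$ is $F(x,w)=\frac{1}{\alpha(\alpha-1)}\sum_{i=1}^n\frac{w_i}{\|w\|_1}\big((x_i/\mu_w)^\alpha-1\big)$. The unweighted index is $F(x)=F(x,\vec 1)=\frac{1}{n\alpha(\alpha-1)}\sum_{i=1}^n\big((x_i/\mu)^\alpha-1\big)$ with $\mu=\frac1n\sum_i x_i$. For a nonnegative matrix $K$ with positive row sums and $\vec y\in\mathbb{R}^n$, the averaging operator is $A(K,\vec y)=\frac{K\vec y}{K\vec 1}$, with division taken entrywise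 and $\vec 1$ the all-ones vector (so $A(K,\vec y)_i$ is the average of $\vec y$ weighted by row $i$ of $K$). *)

From mathcomp Require Import all_boot all_order all_algebra.
From mathcomp Require Import reals exp.
Set Implicit Arguments. Unset Strict Implicit. Unset Printing Implicit Defensive.
Import Order.TTheory GRing.Theory Num.Theory.
Local Open Scope ring_scope.

Section GE.
Variable R : realType.

Definition l1norm n (w : 'I_n -> R) : R := \sum_(i < n) `|w i|.

Definition wmean n (x w : 'I_n -> R) : R :=
  (\sum_(i < n) w i * x i) / l1norm w.

Definition GEw (alpha : R) n (x w : 'I_n -> R) : R :=
  (alpha * (alpha - 1))^-1 *
  \sum_(i < n) (w i / l1norm w) * (powR (x i / wmean x w) alpha - 1).

Definition GE (alpha : R) n (x : 'I_n -> R) : R := GEw alpha x (fun _ => 1).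

Definition mean n (x : 'I_n -> R) : R := (\sum_(i < n) x i) / n%:R.

Definition rowv n (K : 'M[R]_n) (i : 'I_n) : 'I_n -> R := fun j => K i j.
Definition rowsum n (K : 'M[R]_n) : 'I_n -> R := fun i => \sum_(j < n) K i j.

Definition avgop n (K : 'M[R]_n) (y : 'I_n -> R) : 'I_n -> R :=
  fun i => (\sum_(j < n) K i j * y j) / rowsum K i.

End GE.

From mathcomp Require Import all_boot all_order all_algebra.
From mathcomp Require Import reals exp.
From mathcomp.algebra_tactics Require Import ring.
Set Implicit Arguments. Unset Strict Implicit. Unset Printing Implicit Defensive.
Import Order.TTheory GRing.Theory Num.Theory.
Local Open Scope ring_scope.

(* Write S(x, w) = sum_i w_i x_i^alpha for the weighted power sum.  For
   nonnegative weights and data with positive weighted mean mu_w,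
     F(x, w) = (alpha (alpha - 1))^-1 (S(x, w) / (|w|_1 mu_w^alpha) - 1).
   With this closed form every entropy in the statement becomes a power sum:
   the within-row term of row i is S(y, K_i) / (r_i Q_i) with r_i = K_i^T 1
   and Q_i = A(K, y)_i^alpha, so its weight r_i Q_i / (n mu^alpha) cancels the
   denominator.  Column normalization of K gives mass conservation
   sum_i sum_j K_ij f_j = sum_j f_j, hence sum_i S(y, K_i) = S(y, 1),
   |K 1|_1 = n and the K 1-weighted mean of A(K, y) is mu; the between term
   is then (sum_i r_i Q_i) / (n mu^alpha) - 1 and the identity telescopes.
   The factor (alpha (alpha - 1))^-1 is common to all terms. *)

Lemma powR_div (R : realType) (x m a : R) : 0 <= x -> 0 < m ->
  powR (x / m) a = powR x a / powR m a.
Proof.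
move=> x0 m0; rewrite powRM ?invr_ge0 ?(ltW m0) //; congr (_ * _).
have -> : m^-1 = m `^ (-1) by rewrite powR_inv1 // ltW.
by rewrite -powRrM mulrC powRrM powR_inv1 // powR_ge0.
Qed.

Section GeneralizedEntropy.
Variables (R : realType) (alpha : R) (n : nat).

Definition wpowsum (x w : 'I_n -> R) : R := \sum_(i < n) w i * powR (x i) alpha.

Lemma l1norm_ge0w (w : 'I_n -> R) :
  (forall i, 0 <= w i) -> l1norm w = \sum_(i < n) w i.
Proof. by move=> w0; apply: eq_bigr => i _; rewrite ger0_norm. Qed.

Lemma GEw_wpowsum (x w : 'I_n -> R) :
  (forall i, 0 <= w i) -> (forall i, 0 <= x i) -> 0 < wmean x w ->
  GEw alpha x w =
  (alpha * (alpha - 1))^-1 *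
  (wpowsum x w / (l1norm w * powR (wmean x w) alpha) - 1).
Proof.
move=> w0 x0 m0; rewrite /GEw; congr (_ * _).
have L0 : l1norm w != 0.
  by apply: contraTneq m0 => L0; rewrite /wmean L0 invr0 mulr0 ltxx.
have M0 : powR (wmean x w) alpha != 0 by rewrite gt_eqF ?powR_gt0.
rewrite (eq_bigr (fun i => w i * powR (x i) alpha
                  / (l1norm w * powR (wmean x w) alpha) - w i / l1norm w)).
  by rewrite sumrB -!mulr_suml -[\sum_(i < n) w i]l1norm_ge0w // divff.
by move=> i _; rewrite powR_div //; field; rewrite L0.
Qed.

Lemma l1norm_ones : l1norm (fun _ : 'I_n => 1 : R) = n%:R.
Proof. by rewrite l1norm_ge0w // sumr_const card_ord. Qed.

Lemma wmean_ones (x : 'I_n -> R) : wmean x (fun=> 1) = mean x.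
Proof. by rewrite /wmean /mean l1norm_ones; under eq_bigr do rewrite mul1r. Qed.

Lemma mean_gt0 (x : 'I_n -> R) : (0 < n)%N -> (forall i, 0 < x i) -> 0 < mean x.
Proof.
move=> n0 x0; rewrite /mean divr_gt0 ?ltr0n //.
rewrite (bigD1 (Ordinal n0)) //= ltr_pwDl ?sumr_ge0 // => i _; exact: ltW.
Qed.

Variable K : 'M[R]_n.
Hypothesis K_colsum : forall j, \sum_(i < n) K i j = 1.

Lemma colstoch_sum (f : 'I_n -> R) :
  \sum_(i < n) \sum_(j < n) K i j * f j = \sum_(j < n) f j.
Proof.
by rewrite exchange_big; apply: eq_bigr => j _; rewrite -mulr_suml K_colsum mul1r.
Qed.

Lemma sum_rowsum : \sum_(i < n) rowsum K i = n%:R.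
Proof.
have -> : n%:R = \sum_(j < n) (1 : R) by rewrite sumr_const card_ord.
rewrite -(colstoch_sum (fun=> 1)); apply: eq_bigr => i _.
by under [RHS]eq_bigr do rewrite mulr1.
Qed.

Hypothesis rowsum_gt0 : forall i, 0 < rowsum K i.

Lemma l1norm_rowsum : l1norm (rowsum K) = n%:R.
Proof. by rewrite l1norm_ge0w ?sum_rowsum // => i; exact: ltW. Qed.

Lemma wmean_avgop (y : 'I_n -> R) : wmean (avgop K y) (rowsum K) = mean y.
Proof.
rewrite /wmean /mean l1norm_rowsum -colstoch_sum; congr (_ / _).
by apply: eq_bigr => i _; rewrite /avgop mulrC divfK // gt_eqF.
Qed.

Hypothesis K_ge0 : forall i j, 0 <= K i j.

Lemma avgop_gt0 (y : 'I_n -> R) : (forall j, 0 < y j) -> forall i, 0 < avgop K y i.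
Proof.
move=> y0 i; rewrite /avgop divr_gt0 //.
have Ky0 j : 0 <= K i j * y j by rewrite mulr_ge0 ?K_ge0 ?ltW.
rewrite lt0r sumr_ge0 // andbT psumr_neq0 //.
have [j /= Kij] : exists j, true && (0 < K i j).
  by apply: psumr_neq0P => [j _|]; [exact: K_ge0 | exact/eqP/lt0r_neq0/rowsum_gt0].
by apply/hasP; exists j; rewrite ?mem_index_enum //= mulr_gt0.
Qed.

Lemma l1norm_row i : l1norm (rowv K i) = rowsum K i.
Proof. by rewrite l1norm_ge0w // => j; exact: K_ge0. Qed.

Lemma wmean_row (y : 'I_n -> R) i : wmean y (rowv K i) = avgop K y i.
Proof. by rewrite /wmean l1norm_row. Qed.

Lemma sum_wpowsum_rows (y : 'I_n -> R) :
  \sum_(i < n) wpowsum y (rowv K i) = wpowsum y (fun=> 1).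
Proof. by rewrite colstoch_sum; apply: eq_bigr => j _; rewrite mul1r. Qed.

End GeneralizedEntropy.

Theorem proposition1 (R : realType) (alpha : R) (n : nat) (K : 'M[R]_n)
    (y : 'I_n -> R) :
  alpha != 0 -> alpha != 1 -> (0 < n)%N ->
  (forall i j, 0 <= K i j) ->
  (forall j, \sum_(i < n) K i j = 1) ->
  (forall i, 0 < rowsum K i) ->
  (forall i, 0 < y i) ->
  GE alpha y =
    \sum_(i < n)
       (powR (avgop K y i) alpha * rowsum K i) / (powR (mean y) alpha * n%:R)
         * GEw alpha y (rowv K i)
    + GEw alpha (avgop K y) (rowsum K).
Proof.
move=> _ _ n0 K_ge0 K_col K_row y_gt0.
have y_ge0 j : 0 <= y j by exact: ltW.
have a_gt0 := avgop_gt0 K_row K_ge0 y_gt0.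
have mu_gt0 := mean_gt0 n0 y_gt0.
have nN : (n%:R : R) != 0 by rewrite pnatr_eq0 -lt0n.
set c := (alpha * (alpha - 1))^-1; set M := powR (mean y) alpha.
have M0 : M != 0 by rewrite gt_eqF ?powR_gt0.
(* Within-row terms: the weight cancels the normalization of each row. *)
have within i : powR (avgop K y i) alpha * rowsum K i / (M * n%:R)
                * GEw alpha y (rowv K i)
    = c / (M * n%:R) * (wpowsum alpha y (rowv K i)
                        - rowsum K i * powR (avgop K y i) alpha).
  have Q0 : powR (avgop K y i) alpha != 0 by rewrite gt_eqF ?powR_gt0.
  rewrite GEw_wpowsum ?wmean_row ?l1norm_row -/c // => [|j]; last exact: K_ge0.
  by field; rewrite Q0 nN M0 gt_eqF.
rewrite (eq_bigr _ (fun i _ => within i)) -mulr_sumr sumrB sum_wpowsum_rows //.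
have r_ge0 i : 0 <= rowsum K i by exact: ltW.
have a_ge0 i : 0 <= avgop K y i by exact: ltW.
rewrite /GE !GEw_wpowsum ?wmean_ones ?wmean_avgop ?l1norm_rowsum //.
rewrite l1norm_ones /wpowsum -/M -/c.
by field; rewrite M0 nN.
Qed.
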